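(* Consider a mean-variance team stochastic game as described in the context and a joint policy $\boldsymbol{\mu}^*\in\mathcal{U}$. Then $\boldsymbol{\mu}^*$ is a strict local Nash equilibrium if and only if it is a strict local maximum of $J$, i.e. there exists $\bar\delta\in(0,1]$ such that for all $\delta\in(0,\bar\delta]$ and all $\boldsymbol{\mu}=(\mu_1,\dots,\mu_N)\in\mathcal{U}$ with $\boldsymbol{\mu}\neq\boldsymbol{\mu}^*$, $$J(\boldsymbol{\mu}^* )>J\big((1-\delta)\mu_1^*+\delta\mu_1,\dots,(1-\delta)\mu_N^*+\delta\mu_N\big).$$
   Context: Game: finite agents $\mathcal{N}=\{1,\dots,N\}$, finite state space $\mathcal{S}$, finite action sets $\mathcal{A}_i$, $\mathcal{A}=\prod_i\mathcal{A}_i$, transition kernel $P(s'|s,\boldsymbol{a})$, common reward $r:\mathcal{S}\times\mathcal{A}\to\mathbb{R}$. Policies $\mu_i:\mathcal{S}\to\Delta(\mathcal{A}_i)$ (set $\mathcal{U}_i$); joint policies $\boldsymbol{\mu}\in\mathcal{U}=\prod_i\mathcal{U}_i$ with $\boldsymbol{\mu}(\boldsymbol{a}|s)=\prod_i\mu_i(a_i|s)$; $(\mu_i,\boldsymbol{\mu}_{-i})$ means agent $i$ uses $\mu_i$, others use $\boldsymbol{\mu}_{-i}$; $(1-\delta)\mu^*_i+\delta\mu_i$ is the policy $s\mapsto(1-\delta)\mu^*_i(\cdot|s)+\delta\mu_i(\cdot|s)$. Standing assumption: the chain $P^{\boldsymbol{\mu}}(s'|s)=\sum_{\boldsymbol{a}}\boldsymbol{\mu}(\boldsymbol{a}|s)P(s'|s,\boldsymbol{a})$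 is ergodic for every $\boldsymbol{\mu}\in\mathcal{U}$, stationary distribution $\pi^{\boldsymbol{\mu}}$. $\eta(\boldsymbol{\mu})=\sum_s\pi^{\boldsymbol{\mu}}(s)\sum_{\boldsymbol{a}}\boldsymbol{\mu}(\boldsymbol{a}|s)r(s,\boldsymbol{a})$; $\zeta(\boldsymbol{\mu})=\sum_s\pi^{\boldsymbol{\mu}}(s)\sum_{\boldsymbol{a}}\boldsymbol{\mu}(\boldsymbol{a}|s)(r(s,\boldsymbol{a})-\eta(\boldsymbol{\mu}))^2$; for fixed $\beta\ge0$, $J(\boldsymbol{\mu})=\eta(\boldsymbol{\mu})-\beta\zeta(\boldsymbol{\mu})$. A joint policy $\boldsymbol{\mu}^*$ is a strict local Nash equilibrium if there is $\bar\delta\in(0,1]$ such that for all $\delta\in(0,\bar\delta]$, all $i\in\mathcal{N}$ and all $\mu_i\in\mathcal{U}_i$ with $\mu_i\neq\mu_i^*$: $J(\mu_i^*,\boldsymbol{\mu}^*_{-i})>J((1-\delta)\mu_i^*+\delta\mu_i,\boldsymbol{\mu}^*_{-i})$. *)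

From HB Require Import structures.
From mathcomp Require Import all_boot all_order all_algebra.
Set Implicit Arguments. Unset Strict Implicit. Unset Printing Implicit Defensive.
Import Order.TTheory GRing.Theory Num.Theory.
Local Open Scope ring_scope.

Section Game.
Variable R : realFieldType.
Variable N : nat.
Variable S : finType.
Variable A : 'I_N -> finType.

Definition jact := {dffun forall i : 'I_N, A i}.

Definition pol (i : 'I_N) := {ffun S -> {ffun A i -> R}}.
Definition jpol := {dffun forall i : 'I_N, pol i}.

Definition is_policy (i : 'I_N) (m : pol i) : Prop :=
  (forall s a, 0 <= m s a) /\ (forall s, \sum_(a : A i) m s a = 1).
Definition is_jpolicy (mu : jpol) : Prop := forall i, is_policy (mu i).

Definition is_kernel (P : S -> jact -> S -> R) : Prop :=
  (forall s a s', 0 <= P s a s') /\ (forall s a, \sum_(s' : S) P s a s' = 1).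

Definition jprob (mu : jpol) (s : S) (a : jact) : R := \prod_(i < N) mu i s (a i).

Definition chain (P : S -> jact -> S -> R) (mu : jpol) (s s' : S) : R :=
  \sum_(a : jact) jprob mu s a * P s a s'.

Fixpoint nstep (P : S -> jact -> S -> R) (mu : jpol) (n : nat) (s s' : S) : R :=
  match n with
  | O => (s == s')%:R
  | n'.+1 => \sum_(t : S) nstep P mu n' s t * chain P mu t s'
  end.

(* ergodic finite chain (irreducible and aperiodic, i.e. regular):
   some power of the transition matrix is entrywise positive *)
Definition ergodic (P : S -> jact -> S -> R) (mu : jpol) : Prop :=
  exists n : nat, forall s s', 0 < nstep P mu n s s'.

Definition is_stationary (P : S -> jact -> S -> R) (mu : jpol) (pi : S -> R) : Prop :=
  [/\ forall s, 0 <= pi s, \sum_(s : S) pi s = 1 &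
      forall s', \sum_(s : S) pi s * chain P mu s s' = pi s'].

(* pi : jpol -> S -> R is meant to be mu |-> pi^mu *)
Definition eta (r : S -> jact -> R) (pi : jpol -> S -> R) (mu : jpol) : R :=
  \sum_(s : S) pi mu s * \sum_(a : jact) jprob mu s a * r s a.

Definition zeta (r : S -> jact -> R) (pi : jpol -> S -> R) (mu : jpol) : R :=
  \sum_(s : S) pi mu s * \sum_(a : jact) jprob mu s a * (r s a - eta r pi mu) ^+ 2.

Definition Jmv (beta : R) (r : S -> jact -> R) (pi : jpol -> S -> R) (mu : jpol) : R :=
  eta r pi mu - beta * zeta r pi mu.

Definition mix1 (i : 'I_N) (delta : R) (ms m : pol i) : pol i :=
  [ffun s => [ffun a => (1 - delta) * ms s a + delta * m s a]].

Definition mixj (delta : R) (mus mu : jpol) : jpol :=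
  [ffun i => mix1 delta (mus i) (mu i)].

Definition upd (mu : jpol) (i : 'I_N) (m : pol i) : jpol :=
  [ffun j => dfwith (fun k => mu k) m j].

Definition strict_local_NE (beta : R) (r : S -> jact -> R) (pi : jpol -> S -> R)
    (mus : jpol) : Prop :=
  exists2 dbar : R, 0 < dbar <= 1 &
    forall delta : R, 0 < delta <= dbar ->
    forall (i : 'I_N) (m : pol i), is_policy m -> m <> mus i ->
      Jmv beta r pi mus > Jmv beta r pi (upd mus (mix1 delta (mus i) m)).

Definition strict_local_max (beta : R) (r : S -> jact -> R) (pi : jpol -> S -> R)
    (mus : jpol) : Prop :=
  exists2 dbar : R, 0 < dbar <= 1 &
    forall delta : R, 0 < delta <= dbar ->
    forall mu : jpol, is_jpolicy mu -> mu <> mus ->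
      Jmv beta r pi mus > Jmv beta r pi (mixj delta mus mu).

End Game.

From Pilot Require Import Defs.
From HB Require Import structures.
From mathcomp Require Import all_boot all_order all_algebra zify ring lra.
Import Order.TTheory GRing.Theory Num.Theory.
Local Open Scope ring_scope.
Set Implicit Arguments. Unset Strict Implicit.

(* Solving the Poisson equation of the ergodic chain of [mus] gives a
   performance-difference formula: there are action values [Qg], [Qr] such that
   for every joint policy [mu]
     J mu - J mus = D Qg + beta * (D Qr)^2,
     D Q = sum_s pi^mu(s) sum_a (mu(a|s) - mus(a|s)) Q(s,a),
   the square coming from the squared mean in the variance.  A strict local
   maximum is in particular a strict local Nash equilibrium.  Conversely, since
   [beta >= 0], a deviation of one agent in one state can only lower [J] if its
   first-order term [D Qg] is negative; as [D] is linear in the deviating action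
   distribution, this forces [mus] to be deterministic, with a gap [c0 > 0]
   between [Qg] at [mus] and at every single-agent deviation.  For a joint
   mixture [(1 - d) mus + d mu] the agents deviate independently, each with
   probability [O(d)], so [D Qg <= -c0 d X + O(d^2 X)] and [(D Qr)^2 = O(d^2 X)],
   where [X > 0] is the number of agents deviating under [mu], in expectation
   over the stationary distribution of the mixture: [J] strictly decreases for
   small [d]. *)

Section FiniteSums.
Variable R : realFieldType.

Lemma sum_dffun_prod (I : finType) (A : I -> finType) (F : forall i, A i -> R) :
  \sum_(a : {dffun forall i : I, A i}) \prod_i F i (a i) = \prod_i \sum_(c : A i) F i c.
Proof.
pose G i : {ffun A i -> R} := [ffun c => F i c].
transitivity (\sum_(a : {dffun forall i : I, A i}) \prod_i G i (a i)).
  by apply: eq_bigr => a _; apply: eq_bigr => i _; rewrite ffunE.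
rewrite (reindex (@dffun_of_fprod _ A)); last exact/onW_bij/dffun_of_fprod_bij.
under eq_bigr => t _ do under eq_bigr => i _ do rewrite /dffun_of_fprod ffunE.
rewrite big_fprod /= -(bigA_distr_big_dep _ (fun i j => untag 0 (G i) j)).
apply: eq_bigr => i _.
transitivity (\sum_(c : A i) G i c); last by apply: eq_bigr => c _; rewrite ffunE.
by rewrite (big_tag (fun i c => G i c) i).
Qed.

Lemma prod_eq_dffun (I : finType) (A : I -> finType) (a b : {dffun forall i : I, A i}) :
  \prod_i ((a i == b i)%:R : R) = (a == b)%:R.
Proof.
have [<-|neq_ab] := eqVneq a b; first by apply: big1 => i _; rewrite eqxx.
have [i neq_i] : exists i, a i != b i.
  apply/existsP; apply: contraNT neq_ab; rewrite negb_exists => /forallP eq_ab.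
  by apply/eqP/ffunP => i; apply/eqP; rewrite -[_ == _]negbK eq_ab.
by rewrite (bigD1 i) //= (negbTE neq_i) mul0r.
Qed.

Lemma sum_delta (T : finType) (b : T) (F : T -> R) : \sum_a (a == b)%:R * F a = F b.
Proof.
rewrite (bigD1 b) //= eqxx mul1r big1 ?addr0 // => a /negbTE ->.
by rewrite mul0r.
Qed.

Lemma sum_enum_val (T : finType) (F : T -> R) :
  \sum_(i < #|T|) F (enum_val i) = \sum_t F t.
Proof. by rewrite (big_enum_val (A := T)); apply: eq_bigl. Qed.

Lemma fin_pos_lower_bound (T : finType) (P : pred T) (f : T -> R) :
  (forall x, P x -> 0 < f x) -> exists2 c, 0 < c & forall x, P x -> c <= f x.
Proof.
move=> f_gt0; exists (\big[Order.min/1]_(x | P x) f x).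
  by apply: (big_ind (fun y => 0 < y)) => // y z y0 z0; rewrite lt_min y0 z0.
by move=> x Px; rewrite (bigD1 x) //= ge_min lexx.
Qed.

Lemma fin_norm_bound (T : finType) (f : T -> R) :
  exists2 K, 0 <= K & forall x, `|f x| <= K.
Proof.
exists (\sum_x `|f x|); first by apply: sumr_ge0.
move=> x; rewrite (bigD1 x) //= lerDl; exact: sumr_ge0.
Qed.

End FiniteSums.

Section Chain.
Variables (R : realFieldType) (N : nat) (S : finType) (A : 'I_N -> finType).
Variables (P : S -> jact A -> S -> R) (mu : jpol R S A).
Hypotheses (P_kernel : is_kernel P) (mu_policy : is_jpolicy mu).

Lemma jprob_ge0 s a : 0 <= jprob mu s a.
Proof. by apply: prodr_ge0 => i _; case: (mu_policy i). Qed.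

Lemma sum_jprob s : \sum_a jprob mu s a = 1.
Proof.
rewrite (sum_dffun_prod (fun i c => mu i s c)).
by apply: big1 => i _; case: (mu_policy i).
Qed.

Lemma chain_ge0 s t : 0 <= chain P mu s t.
Proof.
apply: sumr_ge0 => a _; apply: mulr_ge0; first exact: jprob_ge0.
by case: P_kernel.
Qed.

Lemma sum_chain s : \sum_t chain P mu s t = 1.
Proof.
rewrite /chain exchange_big /= -(sum_jprob s); apply: eq_bigr => a _.
by rewrite -mulr_sumr; case: P_kernel => _ ->; rewrite mulr1.
Qed.

Lemma nstep_ge0 n s t : 0 <= nstep P mu n s t.
Proof.
elim: n s t => [|n IHn] s t /=; first by rewrite ler0n.
by apply: sumr_ge0 => w _; apply: mulr_ge0; [exact: IHn | exact: chain_ge0].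
Qed.

Lemma nstep_harmonic (u : S -> R) : (forall s, u s = \sum_t chain P mu s t * u t) ->
  forall n s, u s = \sum_t nstep P mu n s t * u t.
Proof.
move=> u_harm; elim=> [|n IHn] s /=.
  by rewrite -(sum_delta s u); apply: eq_bigr => t _; rewrite eq_sym.
under [RHS]eq_bigr do rewrite mulr_suml.
rewrite (IHn s) exchange_big /=; apply: eq_bigr => w _.
by rewrite (u_harm w) mulr_sumr; apply: eq_bigr => t _; rewrite mulrA.
Qed.

Lemma sum_nstep n s : \sum_t nstep P mu n s t = 1.
Proof.
under eq_bigr do rewrite -[nstep _ _ _ _ _]mulr1.
rewrite -(@nstep_harmonic (fun _ => 1)) // => s'.
by under eq_bigr do rewrite mulr1; rewrite sum_chain.
Qed.

Lemma nstep_stationary (p : S -> R) : (forall t, \sum_s p s * chain P mu s t = p t) ->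
  forall n t, \sum_s p s * nstep P mu n s t = p t.
Proof.
move=> p_stat; elim=> [|n IHn] t /=.
  by rewrite -[RHS](sum_delta t p); apply: eq_bigr => s _; rewrite mulrC.
under eq_bigr do rewrite mulr_sumr.
rewrite exchange_big /= -{1}(p_stat t); apply: eq_bigr => w _.
by rewrite -(IHn w) mulr_suml; apply: eq_bigr => s _; rewrite mulrA.
Qed.

Hypothesis mu_ergodic : ergodic P mu.

Lemma stationary_gt0 (p : S -> R) : is_stationary P mu p -> forall s, 0 < p s.
Proof.
case: mu_ergodic => n nstep_gt0 [p_ge0 p_sum1 p_stat] t.
rewrite -(nstep_stationary p_stat n t) lt_def sumr_ge0 ?andbT; last first.
  by move=> s _; apply: mulr_ge0 => //; exact: nstep_ge0.
apply: contra_eqN p_sum1 => /eqP sum0; rewrite big1 ?(eq_sym 0) ?oner_eq0 // => s _.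
have /(_ s isT) := psumr_eq0P (fun s _ => mulr_ge0 (p_ge0 s) (nstep_ge0 n s t)) sum0.
by move/eqP; rewrite mulf_eq0 (gt_eqF (nstep_gt0 s t)) orbF => /eqP.
Qed.

(* The maximum principle: a harmonic function is an average of its values n steps
   ahead with full support, so it is constant once it attains its maximum. *)
Lemma harmonic_const (u : S -> R) : (forall s, u s = \sum_t chain P mu s t * u t) ->
  forall s t, u s = u t.
Proof.
case: mu_ergodic => n nstep_gt0 u_harm s t.
pose s0 := Order.arg_max s predT u.
have u_max x : u x <= u s0.
  by rewrite /s0; case: arg_maxP => // m _; apply.
suff u_s0 x : u x = u s0 by rewrite !u_s0.
have gap0 : \sum_y nstep P mu n s0 y * (u s0 - u y) = 0.
  under eq_bigr do rewrite mulrBr.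
  by rewrite sumrB -(nstep_harmonic u_harm) -mulr_suml sum_nstep mul1r subrr.
have gap_ge0 y : 0 <= nstep P mu n s0 y * (u s0 - u y).
  by rewrite mulr_ge0 ?nstep_ge0 // subr_ge0.
have /(_ x isT)/eqP := psumr_eq0P (fun y _ => gap_ge0 y) gap0.
by rewrite mulf_eq0 (gt_eqF (nstep_gt0 s0 x)) /= subr_eq0 => /eqP.
Qed.

End Chain.

Lemma kermx_sub_corank1 (R : fieldType) (n : nat) (B : 'M[R]_n) (p : 'cV[R]_n) :
  p != 0 -> B *m p = 0 -> (\rank (kermx B) <= 1)%N -> (kermx p <= B)%MS.
Proof.
move=> p_neq0 Bp0 ker_rank.
have B_sub : (B <= kermx p)%MS by rewrite sub_kermx Bp0.
have p_rank : \rank p = 1%N.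
  by apply/eqP; rewrite eqn_leq rank_leq_col lt0n mxrank_eq0.
rewrite -(mxrank_leqif_sup B_sub).2 eqn_leq (mxrankS B_sub) /= mxrank_ker p_rank.
by move: ker_rank; rewrite mxrank_ker; have := rank_leq_row B; lia.
Qed.

Section Poisson.
Variables (R : realFieldType) (S : finType) (Q : S -> S -> R) (p : S -> R).
Hypothesis Q_harmonic_const :
  forall u : S -> R, (forall s, u s = \sum_t Q s t * u t) -> forall s t, u s = u t.
Hypothesis p_stationary : forall t, \sum_s p s * Q s t = p t.
Hypothesis p_neq0 : exists s, p s != 0.

Local Notation n := #|S|.

Definition rowf (u : S -> R) : 'rV[R]_n := \row_j u (enum_val j).
Definition funr (v : 'rV[R]_n) (s : S) : R := v 0 (enum_rank s).

Lemma funrK : cancel funr rowf.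
Proof. by move=> v; apply/rowP => j; rewrite mxE /funr enum_valK. Qed.

(* [laplacian] is the transpose of [1 - Q], so that [rowf u *m laplacian] is [u - Q u]. *)
Definition laplacian : 'M[R]_n := \matrix_(i, j) ((i == j)%:R - Q (enum_val j) (enum_val i)).

Lemma rowf_laplacian u s :
  (rowf u *m laplacian) 0 (enum_rank s) = u s - \sum_t Q s t * u t.
Proof.
rewrite !mxE; under eq_bigr do rewrite !mxE mulrBr.
rewrite sumrB (bigD1 (enum_rank s)) //= eqxx mulr1 big1 ?addr0; last first.
  by move=> i /negbTE ->; rewrite mulr0.
rewrite enum_rankK -(sum_enum_val (fun t => Q s t * u t)).
by congr (_ - _); apply: eq_bigr => i _; rewrite mulrC.
Qed.

Lemma laplacian_stationary : laplacian *m \col_i p (enum_val i) = 0.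
Proof.
apply/colP => j; rewrite !mxE; under eq_bigr do rewrite !mxE mulrBl.
rewrite sumrB (bigD1 j) //= eqxx mul1r big1 ?addr0; last first.
  by move=> i /negbTE; rewrite eq_sym => ->; rewrite mul0r.
rewrite (sum_enum_val (fun s => Q s (enum_val j) * p s)) -[X in X - _]p_stationary.
by under eq_bigr do rewrite mulrC; rewrite subrr.
Qed.

Lemma kermx_laplacian_rank : (\rank (kermx laplacian) <= 1)%N.
Proof.
suff /mxrankS : (kermx laplacian <= (const_mx 1 : 'rV[R]_n))%MS.
  by move/leq_trans; apply; rewrite rank_leq_row.
apply/row_subP => i.
move: (row i _) (row_sub i (kermx laplacian)) => v; rewrite sub_kermx => /eqP vL0.
have v_harm s : funr v s = \sum_t Q s t * funr v t.
  apply/eqP; rewrite -subr_eq0 -rowf_laplacian funrK vL0.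
  by rewrite mxE.
have -> : v = v 0 i *: const_mx 1.
  apply/rowP => j; rewrite !mxE mulr1.
  by have := Q_harmonic_const v_harm (enum_val j) (enum_val i); rewrite /funr !enum_valK.
exact: scalemx_sub.
Qed.

Lemma poisson_solvable (g : S -> R) : \sum_s p s * g s = 0 ->
  exists v : S -> R, forall s, v s = g s + \sum_t Q s t * v t.
Proof.
move=> pg0; pose pc : 'cV[R]_n := \col_i p (enum_val i).
have pc_neq0 : pc != 0.
  case: p_neq0 => s; apply: contraNneq => /colP /(_ (enum_rank s)).
  by rewrite !mxE enum_rankK => ->.
have g_ker : (rowf g <= kermx pc)%MS.
  rewrite sub_kermx; apply/eqP/rowP => j; rewrite !mxE.
  under eq_bigr do rewrite !mxE mulrC.
  by rewrite (sum_enum_val (fun s => p s * g s)) pg0.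
have /submxP [x g_eq] := submx_trans g_ker
  (kermx_sub_corank1 pc_neq0 laplacian_stationary kermx_laplacian_rank).
exists (funr x) => s; apply/eqP; rewrite -subr_eq -rowf_laplacian funrK -g_eq.
by rewrite mxE enum_rankK.
Qed.

End Poisson.

Section MeanVariance.
Variables (R : realFieldType) (N : nat) (S : finType) (A : 'I_N -> finType).
Variables (P : S -> jact A -> S -> R) (pi : jpol R S A -> S -> R).
Hypothesis P_kernel : is_kernel P.
Hypothesis P_ergodic : forall mu, is_jpolicy mu -> ergodic P mu.
Hypothesis pi_stationary : forall mu, is_jpolicy mu -> is_stationary P mu (pi mu).

Lemma pi_gt0 mu : is_jpolicy mu -> forall s, 0 < pi mu s.
Proof.
move=> mu_pol.
exact: (stationary_gt0 P_kernel mu_pol (P_ergodic mu_pol) (pi_stationary mu_pol)).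
Qed.

Lemma sum_chain_mul mu s (v : S -> R) :
  \sum_t chain P mu s t * v t = \sum_a jprob mu s a * \sum_t P s a t * v t.
Proof.
under eq_bigr do rewrite mulr_suml.
rewrite exchange_big /=; apply: eq_bigr => a _; rewrite mulr_sumr.
by apply: eq_bigr => t _; rewrite mulrA.
Qed.

Lemma sum_pi_chain mu (v : S -> R) : is_jpolicy mu ->
  \sum_s pi mu s * \sum_t chain P mu s t * v t = \sum_t pi mu t * v t.
Proof.
move=> mu_pol; have [_ _ pi_stat] := pi_stationary mu_pol.
under eq_bigr do rewrite mulr_sumr.
rewrite exchange_big /=; apply: eq_bigr => t _.
by rewrite -(pi_stat t) mulr_suml; apply: eq_bigr => s _; rewrite mulrA.
Qed.

Definition advantage (mus mu : jpol R S A) (Q : S -> jact A -> R) : R :=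
  \sum_s pi mu s * \sum_a (jprob mu s a - jprob mus s a) * Q s a.

(* Performance difference: with [v] solving the Poisson equation of [mus] for the
   centred reward, [Q := f + P v] is the relative action value of [mus]. *)
Lemma eta_sub_advantage (f : S -> jact A -> R) mus : is_jpolicy mus ->
  exists Q, forall mu, is_jpolicy mu ->
    Defs.eta f pi mu - Defs.eta f pi mus = advantage mus mu Q.
Proof.
move=> mus_pol; have [_ pis_sum1 pis_stat] := pi_stationary mus_pol.
set e := Defs.eta f pi mus.
pose g s := \sum_a jprob mus s a * f s a - e.
have g_centred : \sum_s pi mus s * g s = 0.
  under eq_bigr do rewrite mulrBr.
  by rewrite sumrB -mulr_suml pis_sum1 mul1r subrr.
have pis_neq0 : exists s, pi mus s != 0.
  have [s|/(_ _)/negbFE/eqP pis0] := pickP (fun s => pi mus s != 0); first by exists s.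
  by move: pis_sum1; rewrite big1 // => /eqP; rewrite eq_sym oner_eq0.
have [v v_poisson] := poisson_solvable (harmonic_const P_kernel mus_pol (P_ergodic mus_pol))
  pis_stat pis_neq0 g_centred.
exists (fun s a => f s a + \sum_t P s a t * v t) => mu mu_pol.
have [_ pi_sum1 _] := pi_stationary mu_pol.
have adv_s s : \sum_a (jprob mu s a - jprob mus s a) * (f s a + \sum_t P s a t * v t)
    = (\sum_a jprob mu s a * f s a + \sum_t chain P mu s t * v t) - (v s + e).
  under eq_bigr do rewrite mulrBl.
  have split_sum nu : \sum_a jprob nu s a * (f s a + \sum_t P s a t * v t) =
      \sum_a jprob nu s a * f s a + \sum_a jprob nu s a * \sum_t P s a t * v t.
    by rewrite -big_split; apply: eq_bigr => a _; rewrite mulrDr.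
  by rewrite sumrB v_poisson /g !sum_chain_mul !split_sum; ring.
rewrite /advantage; under eq_bigr do rewrite adv_s mulrBr mulrDr mulrDr.
rewrite sumrB !big_split /= sum_pi_chain // -mulr_suml pi_sum1 mul1r.
by rewrite /Defs.eta -/e; ring.
Qed.

Lemma eta_affine mu (x y z : R) (f g : S -> jact A -> R) : is_jpolicy mu ->
  Defs.eta (fun s a => x * f s a + y * g s a + z) pi mu =
  x * Defs.eta f pi mu + y * Defs.eta g pi mu + z.
Proof.
move=> mu_pol; have [_ pi_sum1 _] := pi_stationary mu_pol.
have inner s : \sum_a jprob mu s a * (x * f s a + y * g s a + z) =
    x * (\sum_a jprob mu s a * f s a) + y * (\sum_a jprob mu s a * g s a) + z.
  rewrite -{2}[z]mulr1 -(sum_jprob mu_pol s) !mulr_sumr -!big_split /=.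
  by apply: eq_bigr => a _; ring.
rewrite /Defs.eta; under eq_bigr do rewrite inner !mulrDr.
rewrite !big_split /= -mulr_suml pi_sum1 mul1r.
by congr (_ + _ + _); rewrite mulr_sumr; apply: eq_bigr => s _; ring.
Qed.

Variables (r : S -> jact A -> R) (beta : R).

Lemma Jmv_eta mu : is_jpolicy mu ->
  Jmv beta r pi mu = Defs.eta r pi mu - beta * Defs.eta (fun s a => r s a ^+ 2) pi mu
    + beta * Defs.eta r pi mu ^+ 2.
Proof.
move=> mu_pol; rewrite /Jmv; set e := Defs.eta r pi mu.
have -> : zeta r pi mu =
    Defs.eta (fun s a => 1 * r s a ^+ 2 + - (2 * e) * r s a + e ^+ 2) pi mu.
  rewrite /zeta -/e; apply: eq_bigr => s _; congr (_ * _).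
  by apply: eq_bigr => a _; congr (_ * _); ring.
by rewrite eta_affine // -/e; ring.
Qed.

(* [Jmv = eta r - beta * eta (r ^ 2) + beta * (eta r) ^ 2], and the square of the
   mean produces the quadratic term. *)
Lemma Jmv_sub_advantage mus : is_jpolicy mus -> exists Qg Qr, forall mu, is_jpolicy mu ->
  Jmv beta r pi mu - Jmv beta r pi mus =
  advantage mus mu Qg + beta * advantage mus mu Qr ^+ 2.
Proof.
move=> mus_pol; set es := Defs.eta r pi mus.
have [Qg Qg_adv] := eta_sub_advantage
  (fun s a => (1 + 2 * beta * es) * r s a + - beta * r s a ^+ 2 + 0) mus_pol.
have [Qr Qr_adv] := eta_sub_advantage r mus_pol.
exists Qg, Qr => mu mu_pol.
by rewrite -Qg_adv // -Qr_adv // !eta_affine // !Jmv_eta // -/es; ring.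
Qed.

Variable mus : jpol R S A.
Hypothesis mus_policy : is_jpolicy mus.

Definition pure (i : 'I_N) (c : A i) : {ffun A i -> R} := [ffun b => (b == c)%:R].

Definition deviation (i : 'I_N) (s : S) (c : A i) : pol R S A i :=
  [ffun t => if t == s then pure c else mus i t].
Arguments deviation : clear implicits.

Lemma pure_inj i : injective (@pure i).
Proof.
move=> b c /ffunP /(_ b); rewrite !ffunE eqxx; case: eqP => // _ /eqP.
by rewrite oner_eq0.
Qed.

Lemma sum_pure i (c : A i) (F : A i -> R) : \sum_b pure c b * F b = F c.
Proof. by rewrite -(sum_delta c); apply: eq_bigr => b _; rewrite ffunE. Qed.

Lemma deviation_policy i s c : is_policy (deviation i s c).
Proof.
have [mus_ge0 mus_sum1] := mus_policy i.
split=> [t b|t]; rewrite ffunE; case: (t == s) => //; first by rewrite ffunE ler0n.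
by rewrite -(sum_pure c (fun=> 1)); apply: eq_bigr => b _; rewrite mulr1.
Qed.

Lemma upd_policy i (m : pol R S A i) : is_policy m -> is_jpolicy (upd mus m).
Proof. by move=> m_pol j; rewrite ffunE; case: dfwithP. Qed.

Lemma mix1_policy i (m : pol R S A i) (d : R) : is_policy m -> 0 <= d <= 1 ->
  is_policy (mix1 d (mus i) m).
Proof.
move=> [m_ge0 m_sum1] /andP [d_ge0 d_le1]; have [mus_ge0 mus_sum1] := mus_policy i.
split=> [t b|t]; rewrite ffunE.
  by rewrite ffunE addr_ge0 // mulr_ge0 // subr_ge0.
under eq_bigr do rewrite ffunE.
by rewrite big_split /= -!mulr_sumr mus_sum1 m_sum1 !mulr1 subrK.
Qed.

Lemma mixj_upd (d : R) i (m : pol R S A i) :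
  mixj d mus (upd mus m) = upd mus (mix1 d (mus i) m).
Proof.
apply/ffunP => j; rewrite !ffunE; have [<-|j_neq_i] := eqVneq i j; first by rewrite !dfwith_in.
rewrite !dfwith_out //; apply/ffunP => s; apply/ffunP => b; rewrite !ffunE.
by ring.
Qed.

Lemma strict_local_NE_of_max :
  strict_local_max beta r pi mus -> strict_local_NE beta r pi mus.
Proof.
move=> [db db_in max]; exists db => // d d_in i m m_pol m_neq.
have upd_neq : upd mus m <> mus.
  by move/ffunP/(_ i); rewrite ffunE dfwith_in.
by rewrite -mixj_upd; apply: max d d_in _ (upd_policy m_pol) upd_neq.
Qed.

Definition others (i : 'I_N) (s : S) (a : jact A) : R := \prod_(j | j != i) mus j s (a j).

Lemma jprob_upd i (m : pol R S A i) t a :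
  jprob (upd mus m) t a = m t (a i) * others i t a.
Proof.
rewrite /jprob (bigD1 i) //= ffunE dfwith_in; congr (_ * _).
by apply: eq_bigr => j j_neq_i; rewrite ffunE dfwith_out // eq_sym.
Qed.

Lemma jprob_others i t a : jprob mus t a = mus i t (a i) * others i t a.
Proof. by rewrite /jprob (bigD1 i). Qed.

Definition dev_value (i : 'I_N) (s : S) (c : A i) (Q : S -> jact A -> R) :=
  \sum_(a : jact A) (a i == c)%:R * others i s a * Q s a.
Arguments dev_value : clear implicits.

Lemma advantage_deviation i s (c : A i) (d : R) Q :
  let nu := upd mus (mix1 d (mus i) (deviation i s c)) in
  advantage mus nu Q =
  pi nu s * (d * (dev_value i s c Q - \sum_b mus i s b * dev_value i s b Q)).
Proof.
move=> nu; rewrite /advantage (bigD1 s) //= [X in _ + X]big1 ?addr0; last first.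
  move=> t /negbTE t_neq_s; apply/eqP; rewrite mulf_eq0; apply/orP; right.
  by apply/eqP/big1 => a _; rewrite jprob_upd (jprob_others i) !ffunE t_neq_s; ring.
have -> : \sum_b mus i s b * dev_value i s b Q =
    \sum_(a : jact A) mus i s (a i) * others i s a * Q s a.
  under eq_bigr do rewrite /dev_value mulr_sumr.
  rewrite exchange_big /=; apply: eq_bigr => a _.
  rewrite -[RHS](sum_delta (a i) (fun b => mus i s b * others i s a * Q s a)).
  by apply: eq_bigr => b _; rewrite eq_sym; ring.
congr (_ * _); rewrite -sumrB mulr_sumr; apply: eq_bigr => a _.
by rewrite jprob_upd (jprob_others i) !ffunE eqxx ffunE; ring.
Qed.

Section StrictNash.
Variables Qg Qr : S -> jact A -> R.
Hypothesis Jmv_sub : forall mu, is_jpolicy mu ->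
  Jmv beta r pi mu - Jmv beta r pi mus =
  advantage mus mu Qg + beta * advantage mus mu Qr ^+ 2.
Hypothesis beta_ge0 : 0 <= beta.

Lemma NE_dev_value_lt : strict_local_NE beta r pi mus ->
  forall i s (c : A i), mus i s != pure c ->
  dev_value i s c Qg < \sum_b mus i s b * dev_value i s b Qg.
Proof.
move=> [db /andP [db_gt0 db_le1] NE] i s c mus_neq_c.
have dev_neq : deviation i s c <> mus i.
  by move/ffunP/(_ s); rewrite ffunE eqxx => eq_c; rewrite eq_c eqxx in mus_neq_c.
have db_in : 0 < db <= db by rewrite db_gt0 lexx.
have := NE db db_in i _ (deviation_policy s c) dev_neq.
set nu := upd _ _; have nu_pol : is_jpolicy nu.
  by apply/upd_policy/mix1_policy; [exact: deviation_policy | rewrite ltW].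
rewrite -subr_gt0 -opprB oppr_gt0 Jmv_sub // !advantage_deviation -/nu.
set p := pi nu s; have p_gt0 : 0 < p by apply: pi_gt0.
set Lr := dev_value i s c Qr - _ => J_lt.
have sq_ge0 := mulr_ge0 beta_ge0 (sqr_ge0 (p * (db * Lr))).
have : p * (db * (dev_value i s c Qg - \sum_b mus i s b * dev_value i s b Qg)) < 0.
  by lra.
by rewrite pmulr_rlt0 // pmulr_rlt0 // subr_lt0.
Qed.

(* A mixed [mus i s] would be beaten by the deviation to a best pure action. *)
Lemma NE_pure : strict_local_NE beta r pi mus -> forall i s, exists b : A i,
  mus i s = pure b /\ forall c, c != b -> dev_value i s c Qg < dev_value i s b Qg.
Proof.
move=> NE i s; have [mus_ge0 mus_sum1] := mus_policy i.
have [b0 _] : exists b0 : A i, true.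
  have [b0 _|A_empty] := pickP (@predT (A i)); first by exists b0.
  by move: (mus_sum1 s); rewrite big_pred0 // => /eqP; rewrite eq_sym oner_eq0.
pose W c := dev_value i s c Qg.
pose b := Order.arg_max b0 predT W.
have W_max c : W c <= W b by rewrite /b; case: arg_maxP => // m _; apply.
have avg_le : \sum_c mus i s c * W c <= W b.
  rewrite -[W b]mul1r -(mus_sum1 s) mulr_suml; apply: ler_sum => c _.
  exact: ler_wpM2l.
have mus_pure : mus i s = pure b.
  apply/eqP; apply: contraT => /(NE_dev_value_lt NE); rewrite -/(W b).
  by rewrite ltNge avg_le.
exists b; split=> // c c_neq_b.
have mus_neq_c : mus i s != pure c.
  by rewrite mus_pure; apply: contra c_neq_b => /eqP/pure_inj ->.
by have := NE_dev_value_lt NE mus_neq_c; rewrite mus_pure sum_pure.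
Qed.

Section PureEquilibrium.
Variable bs : S -> jact A.
Hypothesis mus_pure : forall i s, mus i s = pure (bs s i).

Lemma jprob_pure s a : jprob mus s a = (a == bs s)%:R.
Proof. by rewrite /jprob -prod_eq_dffun; apply: eq_bigr => i _; rewrite mus_pure ffunE. Qed.

Lemma sum_jprob_pure s (F : jact A -> R) : \sum_a jprob mus s a * F a = F (bs s).
Proof. by under eq_bigr do rewrite jprob_pure; rewrite sum_delta. Qed.

Lemma dev_value_single i s (a : jact A) Q : (forall j, j != i -> a j = bs s j) ->
  dev_value i s (a i) Q = Q s a.
Proof.
move=> a_single; rewrite -(sum_delta a (Q s)); apply: eq_bigr => a' _.
rewrite -prod_eq_dffun (bigD1 i) //=; congr (_ * _ * _).
by apply: eq_bigr => j j_neq_i; rewrite mus_pure ffunE a_single.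
Qed.

Lemma NE_single_deviation_lt : strict_local_NE beta r pi mus ->
  forall s (a : jact A) i, (forall j, j != i -> a j = bs s j) -> a i != bs s i ->
  Qg s a < Qg s (bs s).
Proof.
move=> NE s a i a_single a_dev; have [b [mus_b b_best]] := NE_pure NE i s.
have bs_b : bs s i = b by apply: pure_inj; rewrite -mus_pure.
rewrite -(dev_value_single Qg a_single) -(@dev_value_single i s (bs s)) // bs_b.
by apply: b_best; rewrite -bs_b.
Qed.

Definition deviators s (a : jact A) : {set 'I_N} := [set k | a k != bs s k].

Definition devprob (nu : jpol R S A) s k : R := \sum_c nu k s c * (c != bs s k)%:R.

Lemma devprob_ge0 nu s k : is_jpolicy nu -> 0 <= devprob nu s k.
Proof. by move=> nu_pol; apply: sumr_ge0 => c _; rewrite mulr_ge0 ?ler0n //; case: (nu_pol k). Qed.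

Lemma devprob_le1 nu s k : is_jpolicy nu -> devprob nu s k <= 1.
Proof.
move=> nu_pol; have [nu_ge0 nu_sum1] := nu_pol k.
rewrite -(nu_sum1 s); apply: ler_sum => c _.
by case: (c != bs s k); rewrite ?mulr1 ?mulr0.
Qed.

Lemma devprob_mixj mu (d : R) s k : devprob (mixj d mus mu) s k = d * devprob mu s k.
Proof.
rewrite mulr_sumr; apply: eq_bigr => c _; rewrite !ffunE mus_pure ffunE.
by case: eqP; rewrite ?mulr0 ?mulr1 ?subrr ?mulr0 ?add0r.
Qed.

Lemma devprob_gt0 mu : is_jpolicy mu -> mu <> mus -> exists s k, 0 < devprob mu s k.
Proof.
move=> mu_pol mu_neq.
have /existsP [k /existsP [s mu_neq_ks]] : [exists k, [exists s, mu k s != mus k s]].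
  apply: contra_notT mu_neq; rewrite negb_exists => /forallP mu_eq.
  apply/ffunP => k; apply/ffunP => s; apply/eqP.
  by move: (mu_eq k); rewrite negb_exists => /forallP /(_ s) /negPn.
exists s, k; rewrite lt_def devprob_ge0 // andbT; apply: contraNneq mu_neq_ks => devprob0.
have [mu_ge0 mu_sum1] := mu_pol k.
have mu_dev0 c : c != bs s k -> mu k s c = 0.
  move=> c_dev; have /(_ c isT) :=
    psumr_eq0P (fun c _ => mulr_ge0 (mu_ge0 s c) (ler0n _ (c != bs s k))) devprob0.
  by rewrite c_dev mulr1.
apply/eqP/ffunP => c; rewrite mus_pure ffunE; have [->|c_dev] := eqVneq c (bs s k).
  by rewrite -(mu_sum1 s) (bigD1 (bs s k)) //= big1 ?addr0 // => c' /mu_dev0.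
by rewrite mu_dev0.
Qed.

Lemma sum_jprob_prod (nu : jpol R S A) (s : S) (h : forall k, A k -> R) :
  \sum_(a : jact A) jprob nu s a * \prod_k h k (a k) = \prod_k \sum_(c : A k) nu k s c * h k c.
Proof.
rewrite -(@sum_dffun_prod _ _ A (fun k c => nu k s c * h k c)).
by apply: eq_bigr => a _; rewrite /jprob big_split.
Qed.

Lemma sum_jprob_deviators nu s (K : {set 'I_N}) : is_jpolicy nu ->
  \sum_(a : jact A) jprob nu s a * \prod_(k in K) ((a k != bs s k)%:R : R) =
  \prod_(k in K) devprob nu s k.
Proof.
move=> nu_pol.
rewrite (eq_bigr (fun a : jact A => jprob nu s a *
  \prod_k (if k \in K then (a k != bs s k)%:R else 1))); last first.
  by move=> a _; rewrite big_mkcond.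
rewrite (sum_jprob_prod nu s (fun k c => if k \in K then (c != bs s k)%:R else 1)).
rewrite [RHS]big_mkcond; apply: eq_bigr => k _; case: (k \in K) => //.
by under eq_bigr do rewrite mulr1; case: (nu_pol k).
Qed.

Lemma card_deviatorsE s a : (#|deviators s a|%:R : R) = \sum_k (a k != bs s k)%:R.
Proof.
rewrite -sum1_card natr_sum big_mkcond /=.
by apply: eq_bigr => k _; rewrite inE; case: (a k != bs s k).
Qed.

Lemma mean_card_deviators nu s : is_jpolicy nu ->
  \sum_a jprob nu s a * #|deviators s a|%:R = \sum_k devprob nu s k.
Proof.
move=> nu_pol; under eq_bigr do rewrite card_deviatorsE mulr_sumr.
rewrite exchange_big /=; apply: eq_bigr => k _.
have := @sum_jprob_deviators nu s [set k] nu_pol; rewrite big_set1 => <-.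
by apply: eq_bigr => a _; rewrite big_set1.
Qed.

Lemma card_deviators_sqB s a : (#|deviators s a|%:R : R) ^+ 2 - #|deviators s a|%:R =
  \sum_k \sum_(l | l != k) ((a k != bs s k)%:R * (a l != bs s l)%:R : R).
Proof.
have ind_sq (b : bool) : (b%:R * b%:R : R) = b%:R by case: b; rewrite ?mulr1 ?mulr0.
rewrite expr2 !card_deviatorsE mulr_suml.
under eq_bigr => k _ do rewrite mulr_sumr (bigD1 k) //= ind_sq.
by rewrite big_split /= addrAC subrr add0r.
Qed.

Lemma factorial_moment_deviators nu s : is_jpolicy nu ->
  \sum_a jprob nu s a * (#|deviators s a|%:R ^+ 2 - #|deviators s a|%:R) <=
  (\sum_k devprob nu s k) ^+ 2.
Proof.
move=> nu_pol; under eq_bigr do rewrite card_deviators_sqB mulr_sumr.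
rewrite exchange_big /= expr2 mulr_suml; apply: ler_sum => k _.
under eq_bigr do rewrite mulr_sumr.
rewrite exchange_big /= mulr_sumr [X in _ <= X](bigD1 k) //= -[X in X <= _]add0r.
apply: lerD; first by rewrite mulr_ge0 ?devprob_ge0.
apply: ler_sum => l l_neq_k.
have pair_k_l : k \notin [set l] by rewrite inE eq_sym.
have := @sum_jprob_deviators nu s [set k; l] nu_pol.
rewrite big_setU1 //= big_set1 => <-.
by under [X in _ <= X]eq_bigr do rewrite big_setU1 //= big_set1.
Qed.

Lemma deviators0 s a : #|deviators s a| = 0%N -> a = bs s.
Proof.
move/card0_eq => dev0; apply/ffunP => k.
by have := dev0 k; rewrite !inE => /negbFE/eqP.
Qed.

Lemma deviators1 s a : #|deviators s a| = 1%N ->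
  exists i, (forall j, j != i -> a j = bs s j) /\ a i != bs s i.
Proof.
move/eqP/cards1P => [i dev_i]; exists i.
have mem_dev j : (a j != bs s j) = (j == i).
  by rewrite -[j == i]in_set1 -dev_i inE.
by split=> [j j_neq_i|]; [apply/eqP/negbFE; rewrite mem_dev (negbTE j_neq_i) | rewrite mem_dev].
Qed.

Lemma advantage_pure Q nu : is_jpolicy nu ->
  advantage mus nu Q = \sum_s pi nu s * \sum_a jprob nu s a * (Q s a - Q s (bs s)).
Proof.
move=> nu_pol; apply: eq_bigr => s _; congr (_ * _).
under eq_bigr do rewrite mulrBl; under [RHS]eq_bigr do rewrite mulrBr.
by rewrite !sumrB sum_jprob_pure -mulr_suml sum_jprob // mul1r.
Qed.

Lemma mixj_policy mu (d : R) : is_jpolicy mu -> 0 <= d <= 1 -> is_jpolicy (mixj d mus mu).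
Proof. by move=> mu_pol d01 k; rewrite ffunE; apply: mix1_policy. Qed.

Section Bounds.
Variables c0 K Kr : R.
Hypothesis Qg_single_gap :
  forall s a, #|deviators s a| = 1%N -> c0 <= Qg s (bs s) - Qg s a.
Hypothesis Qg_bound : forall s a, `|Qg s a - Qg s (bs s)| <= K.
Hypothesis Qr_bound : forall s a, `|Qr s a - Qr s (bs s)| <= Kr.
Hypothesis c0_gt0 : 0 < c0.

(* Quadratic in the number [n] of deviating agents: exact at [n = 0], a gap of [c0]
   at [n = 1], and for [n >= 2] the crude bound [K] is dominated. *)
Lemma Qg_sub_le s a (n := (#|deviators s a|%:R : R)) :
  Qg s a - Qg s (bs s) <= - c0 * n + (K + c0) * (n ^+ 2 - n).
Proof.
have K_ge0 : 0 <= K := le_trans (normr_ge0 _) (Qg_bound s a).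
rewrite {}/n; case dev: #|deviators s a| => [|[|m]].
- by rewrite (deviators0 dev) subrr mulr0n; lra.
- by have := Qg_single_gap dev; rewrite expr1n; lra.
- have m2_ge2 : 2 <= m.+2%:R :> R by rewrite ler_nat.
  have Qg_le : Qg s a - Qg s (bs s) <= K := le_trans (ler_norm _) (Qg_bound s a).
  move: m2_ge2; move: (m.+2%:R) => x m2_ge2.
  have K_part : 0 <= K * ((x - 2) * (x + 1)).
    by apply: mulr_ge0 => //; apply: mulr_ge0; lra.
  have c0_part : 0 <= c0 * (x * (x - 2)).
    by apply: mulr_ge0; [exact: ltW | apply: mulr_ge0; lra].
  by rewrite expr2; lra.
Qed.

Lemma Qr_sub_le s a : `|Qr s a - Qr s (bs s)| <= Kr * #|deviators s a|%:R.
Proof.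
case dev: #|deviators s a| => [|m]; first by rewrite (deviators0 dev) subrr normr0 mulr0.
have Kr_ge0 : 0 <= Kr := le_trans (normr_ge0 _) (Qr_bound s a).
have m1_ge1 : 1 <= m.+1%:R :> R by rewrite ler1n.
have := Qr_bound s a; move: m1_ge1; move: (m.+1%:R) => x; nra.
Qed.

Section Mixture.
Variables (mu : jpol R S A) (d : R).
Hypotheses (mu_policy : is_jpolicy mu) (d_ge0 : 0 <= d) (d_le1 : d <= 1).

Let nu := mixj d mus mu.
Let nu_policy : is_jpolicy nu.
Proof. by apply: mixj_policy; rewrite ?d_ge0. Qed.
Let E s := \sum_k devprob mu s k.

Lemma sum_devprob_mixj s : \sum_k devprob nu s k = d * E s.
Proof. by rewrite mulr_sumr; apply: eq_bigr => k _; rewrite devprob_mixj. Qed.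

Lemma devprobs_le s : 0 <= E s <= N%:R.
Proof.
rewrite sumr_ge0 => [|k _]; last exact: devprob_ge0.
by rewrite -[N]card_ord -sumr_const ler_sum // => k _; apply: devprob_le1.
Qed.

Lemma mixj_Qg_le s :
  \sum_a jprob nu s a * (Qg s a - Qg s (bs s)) <= d * E s * (- c0 + (K + c0) * d * N%:R).
Proof.
have K_ge0 : 0 <= K := le_trans (normr_ge0 _) (Qg_bound s (bs s)).
apply: le_trans (_ : \sum_a jprob nu s a * (- c0 * #|deviators s a|%:R +
    (K + c0) * (#|deviators s a|%:R ^+ 2 - #|deviators s a|%:R)) <= _).
  by apply: ler_sum => a _; rewrite ler_wpM2l ?jprob_ge0 ?Qg_sub_le.
under eq_bigr do rewrite mulrDr mulrCA [jprob nu s _ * ((K + c0) * _)]mulrCA.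
rewrite big_split /= -!mulr_sumr mean_card_deviators // sum_devprob_mixj.
set F := \sum_a _; have := factorial_moment_deviators s nu_policy.
rewrite -/F sum_devprob_mixj => F_le.
have /andP [E_ge0 E_le] := devprobs_le s.
have dE_ge0 : 0 <= d * E s by rewrite mulr_ge0.
have : (K + c0) * F <= (K + c0) * (d * E s * (d * N%:R)).
  rewrite ler_wpM2l //; first by rewrite addr_ge0 // ltW.
  by apply: le_trans F_le _; rewrite expr2 ler_wpM2l // ler_wpM2l.
by rewrite !mulrA; lra.
Qed.

Lemma mixj_Qr_le s :
  `|\sum_a jprob nu s a * (Qr s a - Qr s (bs s))| <= Kr * (d * E s).
Proof.
apply: le_trans (ler_norm_sum _ _ _) _.
rewrite -sum_devprob_mixj -mean_card_deviators // mulr_sumr; apply: ler_sum => a _.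
rewrite normrM ger0_norm ?jprob_ge0 // mulrCA ler_wpM2l ?jprob_ge0 //.
exact: Qr_sub_le.
Qed.

Let X := \sum_s pi nu s * E s.

Lemma weighted_devprobs_gt0 : mu <> mus -> 0 < X.
Proof.
move=> mu_neq; have [s [k devprob_k_gt0]] := devprob_gt0 mu_policy mu_neq.
rewrite /X (bigD1 s) //= ltr_pwDl ?sumr_ge0 //; last first.
  move=> t _; apply: mulr_ge0; first exact: ltW (pi_gt0 nu_policy t).
  by case/andP: (devprobs_le t).
rewrite mulr_gt0 ?pi_gt0 // /E (bigD1 k) //= ltr_pwDl ?sumr_ge0 // => l _.
exact: devprob_ge0.
Qed.

Lemma weighted_devprobs_le : X <= N%:R.
Proof.
have [_ pi_sum1 _] := pi_stationary nu_policy.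
apply: le_trans (_ : X <= \sum_s pi nu s * N%:R) _; last by rewrite -mulr_suml pi_sum1 mul1r.
apply: ler_sum => s _.
apply: ler_wpM2l; first exact: ltW (pi_gt0 nu_policy s).
by case/andP: (devprobs_le s).
Qed.

Lemma advantage_mixj_Qg_le :
  advantage mus nu Qg <= d * X * (- c0 + (K + c0) * d * N%:R).
Proof.
rewrite advantage_pure // /X mulr_sumr mulr_suml; apply: ler_sum => s _.
have -> : d * (pi nu s * E s) * (- c0 + (K + c0) * d * N%:R) =
    pi nu s * (d * E s * (- c0 + (K + c0) * d * N%:R)) by ring.
by rewrite ler_wpM2l ?(ltW (pi_gt0 nu_policy s)) ?mixj_Qg_le.
Qed.

Lemma advantage_mixj_Qr_le : `|advantage mus nu Qr| <= Kr * (d * X).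
Proof.
rewrite advantage_pure //; apply: le_trans (ler_norm_sum _ _ _) _.
rewrite /X mulr_sumr mulr_sumr; apply: ler_sum => s _.
have -> : Kr * (d * (pi nu s * E s)) = pi nu s * (Kr * (d * E s)) by ring.
rewrite normrM gtr0_norm ?pi_gt0 //.
by rewrite ler_wpM2l ?(ltW (pi_gt0 nu_policy s)) ?mixj_Qr_le.
Qed.

End Mixture.

(* The first-order loss [c0] dominates the second-order terms once
   [d * (c0 + M) <= c0]. *)
Lemma Jmv_mixj_lt mu (d : R) : is_jpolicy mu -> mu <> mus -> 0 < d -> d <= 1 ->
  d * (c0 + N%:R * (K + c0 + beta * Kr ^+ 2)) <= c0 ->
  Jmv beta r pi (mixj d mus mu) < Jmv beta r pi mus.
Proof.
move=> mu_pol mu_neq d_gt0 d_le1; set M := N%:R * _ => d_small.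
have M_def : M = N%:R * (K + c0 + beta * Kr ^+ 2) by []; clearbody M.
have [s [k _]] := devprob_gt0 mu_pol mu_neq.
have Kr_ge0 : 0 <= Kr := le_trans (normr_ge0 _) (Qr_bound s (bs s)).
have d_ge0 := ltW d_gt0.
rewrite -subr_lt0 Jmv_sub; last by apply: mixj_policy; rewrite ?d_ge0.
have Qg_le := advantage_mixj_Qg_le mu_pol d_ge0 d_le1.
have Qr_le := advantage_mixj_Qr_le mu_pol d_ge0 d_le1.
have X_gt0 := weighted_devprobs_gt0 mu_pol d_ge0 d_le1 mu_neq.
have X_le := weighted_devprobs_le mu_pol d_ge0 d_le1.
move: Qg_le Qr_le X_gt0 X_le; set X := \sum_s _; set Y := advantage _ _ Qr.
set Z := advantage _ _ Qg => Qg_le Qr_le X_gt0 X_le.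
have dX_ge0 : 0 <= d * X by rewrite mulr_ge0 ?ltW.
have Y_sq : Y ^+ 2 <= Kr ^+ 2 * d ^+ 2 * X * N%:R.
  rewrite -real_normK ?num_real //; apply: le_trans (_ : (Kr * (d * X)) ^+ 2 <= _).
    by apply: lerXn2r; rewrite ?nnegrE ?normr_ge0 ?(mulr_ge0 Kr_ge0 dX_ge0).
  have -> : (Kr * (d * X)) ^+ 2 = Kr ^+ 2 * d ^+ 2 * X * X by ring.
  by rewrite ler_wpM2l // !mulr_ge0 ?sqr_ge0 // ltW.
have : Z + beta * Y ^+ 2 <= d * X * (- c0 + d * M).
  have -> : d * X * (- c0 + d * M) = d * X * (- c0 + (K + c0) * d * N%:R)
      + beta * (Kr ^+ 2 * d ^+ 2 * X * N%:R) by rewrite M_def; ring.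
  exact: lerD Qg_le (ler_wpM2l beta_ge0 Y_sq).
have gap_lt0 : - c0 + d * M < 0.
  by have := mulr_gt0 d_gt0 c0_gt0; rewrite mulrDr in d_small; lra.
by move/le_lt_trans; apply; rewrite pmulr_rlt0 ?mulr_gt0.
Qed.

End Bounds.

Lemma strict_local_max_of_pure_NE :
  strict_local_NE beta r pi mus -> strict_local_max beta r pi mus.
Proof.
move=> NE.
have [c0 c0_gt0 c0_le] : exists2 c0, 0 < c0 &
    forall x : S * jact A, #|deviators x.1 x.2| == 1%N -> c0 <= Qg x.1 (bs x.1) - Qg x.1 x.2.
  apply: fin_pos_lower_bound => -[s a] /eqP/deviators1 [i [a_single a_dev]].
  by rewrite subr_gt0 (NE_single_deviation_lt NE a_single a_dev).
have Qg_gap s a : #|deviators s a| = 1%N -> c0 <= Qg s (bs s) - Qg s a.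
  by move=> /eqP dev1; apply: (c0_le (s, a)).
have [K K_ge0 Qg_bound] := fin_norm_bound (fun x => Qg x.1 x.2 - Qg x.1 (bs x.1)).
have [Kr Kr_ge0 Qr_bound] := fin_norm_bound (fun x => Qr x.1 x.2 - Qr x.1 (bs x.1)).
pose M := N%:R * (K + c0 + beta * Kr ^+ 2).
have M_ge0 : 0 <= M.
  have c0_ge0 := ltW c0_gt0; have bKr_ge0 := mulr_ge0 beta_ge0 (sqr_ge0 Kr).
  by apply: mulr_ge0; [exact: ler0n | lra].
have cM_gt0 : 0 < c0 + M := ltr_wpDr M_ge0 c0_gt0.
have dbar_le1 : c0 / (c0 + M) <= 1 by rewrite ler_pdivrMr // mul1r lerDl.
exists (c0 / (c0 + M)); first by rewrite divr_gt0.
move=> d /andP [d_gt0 d_le] mu mu_pol mu_neq.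
apply: (Jmv_mixj_lt Qg_gap (fun s a => Qg_bound (s, a)) (fun s a => Qr_bound (s, a))) => //.
  exact: le_trans dbar_le1.
by rewrite -ler_pdivlMr.
Qed.

End PureEquilibrium.

Lemma strict_local_max_of_NE :
  strict_local_NE beta r pi mus -> strict_local_max beta r pi mus.
Proof.
move=> NE; have pure_ex i s : exists b, mus i s == pure b.
  by have [b [mus_b _]] := NE_pure NE i s; exists b; rewrite mus_b.
pose bs s : jact A := [ffun i => xchoose (pure_ex i s)].
apply: (@strict_local_max_of_pure_NE bs) => // i s.
by rewrite ffunE; exact/eqP/(xchooseP (pure_ex i s)).
Qed.

End StrictNash.

End MeanVariance.

Theorem theorem5 (R : realFieldType) (N : nat) (S : finType) (A : 'I_N -> finType)
    (P : S -> jact A -> S -> R) (r : S -> jact A -> R) (beta : R)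
    (pi : jpol R S A -> S -> R) (mus : jpol R S A) :
  is_kernel P ->
  (forall mu : jpol R S A, is_jpolicy mu -> ergodic P mu) ->
  (forall mu : jpol R S A, is_jpolicy mu -> is_stationary P mu (pi mu)) ->
  0 <= beta ->
  is_jpolicy mus ->
  (strict_local_NE beta r pi mus <-> strict_local_max beta r pi mus).
Proof.
move=> P_kernel P_ergodic pi_stationary beta_ge0 mus_policy.
split; last exact: strict_local_NE_of_max.
have [Qg [Qr Jmv_sub]] := Jmv_sub_advantage P_kernel P_ergodic pi_stationary r beta mus_policy.
exact: (strict_local_max_of_NE P_kernel P_ergodic pi_stationary mus_policy Jmv_sub beta_ge0).
Qed.
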